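(* Let $\rho$ be a 2-qubit pure state whose Bloch representation has the form $\boldsymbol{\alpha}=O_1(\mu,0,0)^T$, $\boldsymbol{\beta}=O_2(\mu,0,0)^T$, $C=O_1\,\mathrm{diag}(1,\sin\theta,-\sin\theta)\,O_2^T$, with $\theta\in[0,\pi/2]$, $\mu=\cos\theta$, $O_1,O_2\in SO(3)$, and suppose $|\mu|\in(0,1)$. Then $I_{\chi^2,post}(\rho)<2$.
   Context: Let $\sigma_1,\sigma_2,\sigma_3$ be the Pauli matrices. For a 2-qubit density matrix $\rho$ its Bloch vector is $(b_1,\dots,b_{16})$, where $b_1=1$; $(b_2,b_3,b_4)=\boldsymbol{\alpha}$ with $\alpha_j=\operatorname{tr}((\sigma_j\otimes I)\rho)$; $(b_5,b_6,b_7)=\boldsymbol{\beta}$ with $\beta_j=\operatorname{tr}((I\otimes\sigma_j)\rho)$; and $(b_8,\dots,b_{16})$ are the entries $C_{jk}=\operatorname{tr}((\sigma_j\otimes\sigma_k)\rho)$ of the $3\times3$ matrix $C$ in row-major order. Every 2-qubit pure state has a Bloch representation of the displayed form. For $b\in[-1,1]$ and $h\in(-1,1)$, $D_{\chi^2}(b,h)=\frac{((b+1)/2)^2}{(h+1)/2}+\frac{((1-b)/2)^2}{(1-h)/2}-1$; if $h=\pm1$ and $b=h$, set $D_{\chi^2}(b,h)=0$. The posterior information content of a pure state with Bloch vector $(b_1,\dots,b_{16})$ is defined as follows. For $i=2,\dots,16$, let $b_i^{max}$ and $b_i^{min}$ be the maximum and the minimum of the $i$-th Bloch component over all 2-qubit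 pure states whose components $1,\dots,i-1$ equal $b_1,\dots,b_{i-1}$, and let $h_i=(b_i^{max}+b_i^{min})/2$. Then $I_{\chi^2,post}=\sum_{i=2}^{16}D_{\chi^2}(b_i,h_i)$. *)

From HB Require Import structures.
From mathcomp Require Import all_boot all_order all_algebra.
From mathcomp Require Import complex mxtens.
From mathcomp Require Import boolp classical_sets reals trigo.
Set Implicit Arguments. Unset Strict Implicit. Unset Printing Implicit Defensive.
Import Order.TTheory GRing.Theory Num.Theory.
Local Open Scope ring_scope.
Local Open Scope classical_set_scope.

Section Defs.
Variable R : realType.

Definition sigma (a : nat) : 'M[R[i]]_2 :=
  match a with
  | 0 => 1%:M
  | 1 => \matrix_(i < 2, j < 2) (if i != j then 1 else 0)
  | 2 => \matrix_(i < 2, j < 2)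
           (if i == j then 0 else if i == 0 :> nat then - 'i%C else 'i%C)
  | _ => \matrix_(i < 2, j < 2)
           (if i == j then (if i == 0 :> nat then 1 else -1) else 0)
  end.

Definition adj {m n} (A : 'M[R[i]]_(m, n)) : 'M[R[i]]_(n, m) :=
  (map_mx (@conjc R) A)^T.

Definition pure2 (rho : 'M[R[i]]_(2 * 2)) : Prop :=
  exists psi : 'cV[R[i]]_(2 * 2), adj psi *m psi = 1 /\ rho = psi *m adj psi.

(* 1-based Bloch index k -> pair (a,b) with observable sigma a (x) sigma b:
   1 -> I(x)I ; 2,3,4 -> sigma_j (x) I ; 5,6,7 -> I (x) sigma_j ;
   8..16 -> sigma_j (x) sigma_k, row-major in (j,k). *)
Definition bloch_pair (k : nat) : nat * nat :=
  if (k <= 1)%N then (0%N, 0%N)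
  else if (k <= 4)%N then ((k - 1)%N, 0%N)
  else if (k <= 7)%N then (0%N, (k - 4)%N)
  else ((1 + (k - 8) %/ 3)%N, (1 + (k - 8) %% 3)%N).

(* k-th Bloch component (k = 1..16): tr((sigma_a (x) sigma_b) rho), which is
   real for Hermitian rho; we take its real part. *)
Definition bloch (rho : 'M[R[i]]_(2 * 2)) (k : nat) : R :=
  @complex.Re R (\tr ((sigma (bloch_pair k).1 *t sigma (bloch_pair k).2) *m rho)).

Definition cond_values (b : nat -> R) (i : nat) : set R :=
  [set bloch rho i | rho in [set rho | pure2 rho /\
      forall k, (1 <= k < i)%N -> bloch rho k = b k]].

Definition bmax (b : nat -> R) (i : nat) : R := sup (cond_values b i).
Definition bmin (b : nat -> R) (i : nat) : R := inf (cond_values b i).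
Definition hmid (b : nat -> R) (i : nat) : R := (bmax b i + bmin b i) / 2.

(* chi^2 divergence; for h = +-1 (then necessarily b = h) it is 0 *)
Definition Dchi2 (b h : R) : R :=
  if (-1 < h) && (h < 1) then
    ((b + 1) / 2) ^+ 2 / ((h + 1) / 2) + ((1 - b) / 2) ^+ 2 / ((1 - h) / 2) - 1
  else 0.

Definition Ipost (b : nat -> R) : R :=
  \sum_(2 <= i < 17) Dchi2 (b i) (hmid b i).

Definition SO3 (O : 'M[R]_3) : Prop := O^T *m O = 1%:M /\ \det O = 1.

End Defs.

From HB Require Import structures.
From mathcomp Require Import all_boot all_order all_algebra.
From mathcomp Require Import complex mxtens.
From mathcomp Require Import boolp classical_sets reals trigo.
From mathcomp Require Import ring lra zify.
Import Order.TTheory GRing.Theory Num.Theory.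
Local Open Scope ring_scope.

Set Implicit Arguments. Unset Strict Implicit. Unset Printing Implicit Defensive.

(* For i <= 6 a local (anti)unitary fixes b_1, ..., b_(i-1)
   and negates b_i, so the conditional range of b_i is symmetric about 0,
   h_i = 0 and D(b_i, h_i) <= b_i^2; for i = 7, |beta| = |alpha| leaves only
   the values +-b_7.  These terms add up to at most |alpha|^2 + |beta|^2 = 2 mu^2.
   Correlations.  Every pure state with the given alpha and beta has
   C = O1 diag(1, [[e, f], [f, -e]]) O2^T with e^2 + f^2 = s^2 = 1 - mu^2, so
   C_m = A_m + e P_m + f Q_m for a point (e, f) of a circle, the actual state
   being (s, 0).  Before the first m1 with (P, Q) <> 0 every C_m is determined.
   A half-turn of the first qubit about O1 e_1 makes the range of C_m1
   symmetric about A_m1, giving D <= s^2 P^2 / (P^2 + Q^2); the constraint on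
   C_m1 leaves at most two points of the circle, the first later component
   separating them gives D <= s^2 Q^2 / (P^2 + Q^2), and all others are
   determined.  Hence I <= 2 mu^2 + s^2 = 1 + mu^2 < 2. *)

Section RealCoordinates.
Variable R : realType.

(* [RState x0 .. x3 y0 .. y3] encodes psi = (x_p + i y_p)_p in the basis
   |00>, |01>, |10>, |11>; [bloch_poly v k] is Re tr((sigma_a (x) sigma_b) psi psi^+)
   written out (see [bloch_proj]). *)
Record rstate := RState { x0 : R; x1 : R; x2 : R; x3 : R; y0 : R; y1 : R; y2 : R; y3 : R }.

Definition bloch_poly (v : rstate) (k : nat) : R :=
  let: RState x0 x1 x2 x3 y0 y1 y2 y3 := v in
  match k with
  | 1 => x0^+2 + x1^+2 + x2^+2 + x3^+2 + y0^+2 + y1^+2 + y2^+2 + y3^+2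
  | 2 => 2*x0*x2 + 2*x1*x3 + 2*y0*y2 + 2*y1*y3
  | 3 => 2*x0*y2 + 2*x1*y3 - 2*x2*y0 - 2*x3*y1
  | 4 => x0^+2 + x1^+2 - x2^+2 - x3^+2 + y0^+2 + y1^+2 - y2^+2 - y3^+2
  | 5 => 2*x0*x1 + 2*x2*x3 + 2*y0*y1 + 2*y2*y3
  | 6 => 2*x0*y1 - 2*x1*y0 + 2*x2*y3 - 2*x3*y2
  | 7 => x0^+2 - x1^+2 + x2^+2 - x3^+2 + y0^+2 - y1^+2 + y2^+2 - y3^+2
  | 8 => 2*x0*x3 + 2*x1*x2 + 2*y0*y3 + 2*y1*y2
  | 9 => 2*x0*y3 - 2*x1*y2 + 2*x2*y1 - 2*x3*y0
  | 10 => 2*x0*x2 - 2*x1*x3 + 2*y0*y2 - 2*y1*y3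
  | 11 => 2*x0*y3 + 2*x1*y2 - 2*x2*y1 - 2*x3*y0
  | 12 => 2*x1*x2 - 2*x0*x3 + 2*y1*y2 - 2*y0*y3
  | 13 => 2*x0*y2 - 2*x1*y3 - 2*x2*y0 + 2*x3*y1
  | 14 => 2*x0*x1 - 2*x2*x3 + 2*y0*y1 - 2*y2*y3
  | 15 => 2*x0*y1 - 2*x1*y0 - 2*x2*y3 + 2*x3*y2
  | 16 => x0^+2 - x1^+2 - x2^+2 + x3^+2 + y0^+2 - y1^+2 - y2^+2 + y3^+2
  | _ => 0 end.

Lemma sqr_pair_bound (x y : R) : - (x ^+ 2 + y ^+ 2) <= 2 * x * y <= x ^+ 2 + y ^+ 2.
Proof.
apply/andP; split.
  by rewrite -subr_ge0 (_ : _ - _ = (x + y) ^+ 2) ?sqr_ge0 //; ring.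
by rewrite -subr_ge0 (_ : _ - _ = (x - y) ^+ 2) ?sqr_ge0 //; ring.
Qed.

Ltac pair_bounds :=
  repeat match goal with |- context [2 * ?x * ?y] =>
    have := sqr_pair_bound x y; generalize (2 * x * y) => ? end.

Lemma bloch_poly_bound (v : rstate) (k : nat) : (2 <= k <= 16)%N ->
  - bloch_poly v 1 <= bloch_poly v k <= bloch_poly v 1.
Proof.
(* each b_k with k >= 2 is a signed sum of squares, or of terms 2 x y over a
   perfect matching of the eight coordinates *)
case: v => p0 p1 p2 p3 q0 q1 q2 q3 /andP[k2 k16].
have := sqr_ge0 p0; have := sqr_ge0 p1; have := sqr_ge0 p2; have := sqr_ge0 p3.
have := sqr_ge0 q0; have := sqr_ge0 q1; have := sqr_ge0 q2; have := sqr_ge0 q3.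
move=> *; case: k k2 k16 => [|[|k]] // _ hk.
do 15 (case: k hk => [_|k hk]; first by rewrite /=; pair_bounds; move=> *; apply/andP; split; lra).
by [].
Qed.
End RealCoordinates.

Section PureStates.
Variable R : realType.

Definition state_vec (v : rstate R) : 'cV[R[i]]_(2 * 2) :=
  \col_(p < 2 * 2) (match val p with
    | 0 => x0 v +i* y0 v | 1 => x1 v +i* y1 v
    | 2 => x2 v +i* y2 v | _ => x3 v +i* y3 v end)%C.

Definition rstate_of (psi : 'cV[R[i]]_(2 * 2)) : rstate R :=
  let c (p : 'I_(2 * 2)) := psi p 0 in
  RState (complex.Re (c 0)) (complex.Re (c 1)) (complex.Re (c 2)) (complex.Re (c 3))
         (complex.Im (c 0)) (complex.Im (c 1)) (complex.Im (c 2)) (complex.Im (c 3)).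

Lemma state_vecK : cancel state_vec rstate_of.
Proof. by case=> *; rewrite /rstate_of !mxE. Qed.

Lemma trace_mul_proj (M : 'M[R[i]]_(2 * 2)) (psi : 'cV[R[i]]_(2 * 2)) :
  \tr (M *m (psi *m adj psi)) = \sum_i \sum_j M i j * (psi j 0 * (psi i 0)^*)%C.
Proof.
apply: eq_bigr => i _; rewrite mxE; apply: eq_bigr => j _.
by rewrite mxE big_ord1 !mxE.
Qed.

Lemma ord4_lifts :
  (lift ord0 (lift ord0 (lift ord0 ord0)) = 3 :> 'I_(2 * 2))
  * (lift ord0 (lift ord0 ord0) = 2 :> 'I_(2 * 2)) * (lift ord0 ord0 = 1 :> 'I_(2 * 2)).
Proof. by do ![split]; apply: val_inj. Qed.

Lemma bloch_proj (psi : 'cV[R[i]]_(2 * 2)) (k : nat) : (1 <= k <= 16)%N ->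
  bloch (psi *m adj psi) k = bloch_poly (rstate_of psi) k.
Proof.
case/andP=> k1 k16; rewrite /bloch trace_mul_proj !big_ord_recl !big_ord0 /rstate_of !ord4_lifts.
move: (psi 0 0) (psi 1 0) (psi 2 0) (psi 3 0) => [p0 q0] [p1 q1] [p2 q2] [p3 q3].
case: k k1 k16 => [//|k] _ hk.
by do 16 (case: k hk => [_|k hk]; first by rewrite /= !mxE /=; ring).
Qed.

Lemma unit_vec_norm (psi : 'cV[R[i]]_(2 * 2)) :
  adj psi *m psi = 1 <-> bloch_poly (rstate_of psi) 1 = 1.
Proof.
rewrite /rstate_of; split.
  move/matrixP => /(_ 0 0); rewrite !mxE !big_ord_recl big_ord0 !mxE /= !ord4_lifts.
  move: (psi 0 0) (psi 1 0) (psi 2 0) (psi 3 0) => [p0 q0] [p1 q1] [p2 q2] [p3 q3].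
  by move=> /(congr1 (@complex.Re R)) /= <-; ring.
move=> h; apply/matrixP => i j; rewrite !ord1 !mxE !big_ord_recl big_ord0 !mxE /= !ord4_lifts.
move: (psi 0 0) (psi 1 0) (psi 2 0) (psi 3 0) h => [p0 q0] [p1 q1] [p2 q2] [p3 q3] /= h.
by apply/eqP; rewrite eq_complex /= -h; apply/andP; split; apply/eqP; ring.
Qed.

Lemma cond_valuesP (b : nat -> R) (i : nat) (x : R) : (2 <= i <= 16)%N ->
  cond_values b i x <-> exists v : rstate R, [/\ bloch_poly v 1 = 1,
    forall k, (1 <= k < i)%N -> bloch_poly v k = b k & x = bloch_poly v i].
Proof.
move=> /andP[i2 i16]; have k16 k : (k < i)%N -> (k <= 16)%N by lia.
split.
- case=> rho [[psi [/unit_vec_norm hn ->]] hk] <-; exists (rstate_of psi); split => //.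
    by move=> k /andP[k1 ki]; rewrite -hk ?k1 // bloch_proj // k1 k16.
  by rewrite bloch_proj // i16 andbT; lia.
- case=> v [hn hk ->]; have [psi hpsi] : exists psi, rstate_of psi = v.
    by exists (state_vec v); exact: state_vecK.
  exists (psi *m adj psi); last by rewrite bloch_proj -?hpsi // i16 andbT; lia.
  split; first by exists psi; split => //; apply/unit_vec_norm; rewrite hpsi.
  by move=> k /andP[k1 ki]; rewrite bloch_proj ?hpsi ?hk ?k1 ?k16.
Qed.

Lemma cond_values_bounded (b : nat -> R) (i : nat) (x : R) : (2 <= i <= 16)%N ->
  cond_values b i x -> -1 <= x <= 1.
Proof.
by move=> hi /(cond_valuesP _ _ hi) [v [hn _ ->]]; rewrite -hn; exact: bloch_poly_bound.
Qed.

Lemma pure2_rstate (rho : 'M[R[i]]_(2 * 2)) : pure2 rho ->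
  exists v : rstate R, bloch_poly v 1 = 1 /\
    forall k, (1 <= k <= 16)%N -> bloch rho k = bloch_poly v k.
Proof.
case=> psi [/unit_vec_norm hn ->]; exists (rstate_of psi); split => //.
exact: bloch_proj.
Qed.

End PureStates.

Lemma det_mx33 (R : comNzRingType) (A : 'M[R]_3) : \det A =
  A 0 0 * (A 1 1 * A 2 2 - A 1 2 * A 2 1) - A 0 1 * (A 1 0 * A 2 2 - A 1 2 * A 2 0)
  + A 0 2 * (A 1 0 * A 2 1 - A 1 1 * A 2 0).
Proof.
rewrite (expand_det_row _ 0) !big_ord_recl big_ord0 /cofactor.
rewrite !(expand_det_row _ 0) !big_ord_recl !big_ord0 /cofactor !det_mx11 !mxE /=.
pose a (i j : nat) := A (inord i) (inord j).
have aE i j : A i j = a i j by rewrite /a !inord_val.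
rewrite !aE; repeat match goal with |- context [a ?i ?j] =>
  let i' := eval vm_compute in i in let j' := eval vm_compute in j in
  change (a i j) with (a i' j') end.
by rewrite /a /= !expr0 !expr1 ?sqrrN1; ring.
Qed.

Lemma mulmx3E (R : pzSemiRingType) m n (A : 'M[R]_(m, 3)) (B : 'M[R]_(3, n)) i j :
  (A *m B) i j = A i 0 * B 0 j + A i 1 * B 1 j + A i 2 * B 2 j.
Proof.
have l1 : lift ord0 ord0 = 1 :> 'I_3 by apply: val_inj.
have l2 : lift ord0 (lift ord0 ord0) = 2 :> 'I_3 by apply: val_inj.
by rewrite mxE !big_ord_recl big_ord0 addr0 addrA l2 l1.
Qed.

Lemma ord3P (i : 'I_3) : [\/ i = 0, i = 1 | i = 2].
Proof.
by case: i => [[|[|[|//]]] ?]; [constructor 1 | constructor 2 | constructor 3]; apply: val_inj.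
Qed.

Section BlochIdentities.
Variable R : realType.
Implicit Types (v : rstate R) (u n : 'cV[R]_3).

Definition loc_a v : 'cV[R]_3 := \col_(j < 3) bloch_poly v (j + 2).
Definition loc_b v : 'cV[R]_3 := \col_(j < 3) bloch_poly v (j + 5).
Definition corr v : 'M[R]_3 := \matrix_(j < 3, k < 3) bloch_poly v (8 + 3 * j + k).
Definition sqr_norm u : R := (u^T *m u) 0 0.

Lemma sqr_normE u : sqr_norm u = u 0 0 ^+ 2 + u 1 0 ^+ 2 + u 2 0 ^+ 2.
Proof. by rewrite /sqr_norm mulmx3E !mxE !expr2. Qed.

Section Identities.
Variable v : rstate R.
Local Notation N := (bloch_poly v 1).

Lemma corr_loc_b : corr v *m loc_b v = N *: loc_a v.
Proof.
apply/matrixP => i k; case: (ord3P i) => ->;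
  by rewrite mulmx3E !mxE /=; case: v => * /=; ring.
Qed.

Lemma corr_tr_loc_a : (corr v)^T *m loc_a v = N *: loc_b v.
Proof.
apply/matrixP => i k; case: (ord3P i) => ->;
  by rewrite mulmx3E !mxE /=; case: v => * /=; ring.
Qed.

Lemma corr_corr_tr :
  corr v *m (corr v)^T = (N ^+ 2 - sqr_norm (loc_a v))%:M + loc_a v *m (loc_a v)^T.
Proof.
apply/matrixP => i j; case: (ord3P i) => ->; case: (ord3P j) => ->;
  by rewrite !mulmx3E sqr_normE !mxE big_ord1 !mxE /=; case: v => * /=; ring.
Qed.

Lemma det_corr : \det (corr v) = - (N ^+ 2 - sqr_norm (loc_a v)) * N.
Proof. by rewrite det_mx33 sqr_normE !mxE /=; case: v => * /=; ring. Qed.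

Lemma sqr_norm_loc_b : sqr_norm (loc_b v) = sqr_norm (loc_a v).
Proof. by rewrite !sqr_normE !mxE /=; case: v => * /=; ring. Qed.

End Identities.

(* [rot1 n v] is the state (n.sigma (x) I) psi: for a unit vector n, a half-turn
   of the first qubit about the axis n *)
Definition rot1 n v : rstate R :=
  let: RState x0 x1 x2 x3 y0 y1 y2 y3 := v in
  let n1 := n 0 0 in let n2 := n 1 0 in let n3 := n 2 0 in
  RState (n3 * x0 + n1 * x2 + n2 * y2) (n3 * x1 + n1 * x3 + n2 * y3)
     (n1 * x0 - n2 * y0 - n3 * x2) (n1 * x1 - n2 * y1 - n3 * x3)
     (n3 * y0 + n1 * y2 - n2 * x2) (n3 * y1 + n1 * y3 - n2 * x3)
     (n1 * y0 + n2 * x0 - n3 * y2) (n1 * y1 + n2 * x1 - n3 * y3).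

Definition half_turn n : 'M[R]_3 := 2 *: (n *m n^T) - (sqr_norm n)%:M.

Section HalfTurn.
Variables (n : 'cV[R]_3) (v : rstate R).

Lemma norm_rot1 : bloch_poly (rot1 n v) 1 = sqr_norm n * bloch_poly v 1.
Proof. by rewrite sqr_normE; case: v => * /=; ring. Qed.

Lemma loc_a_rot1 : loc_a (rot1 n v) = half_turn n *m loc_a v.
Proof.
apply/matrixP => i k; case: (ord3P i) => ->;
  by rewrite mulmx3E /half_turn !mxE !big_ord1 !mxE sqr_normE /=; case: v => * /=; ring.
Qed.

Lemma loc_b_rot1 : loc_b (rot1 n v) = sqr_norm n *: loc_b v.
Proof.
apply/matrixP => i k; case: (ord3P i) => ->;
  by rewrite !mxE sqr_normE /=; case: v => * /=; ring.
Qed.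

Lemma corr_rot1 : corr (rot1 n v) = half_turn n *m corr v.
Proof.
apply/matrixP => i j; case: (ord3P i) => ->; case: (ord3P j) => ->;
  by rewrite mulmx3E /half_turn !mxE !big_ord1 !mxE sqr_normE /=; case: v => * /=; ring.
Qed.

End HalfTurn.

End BlochIdentities.

Section Divergence.
Variable R : realType.
Local Open Scope classical_set_scope.
Implicit Types (S : set R) (x h a c B : R).

Lemma Dchi2E x h : -1 < h < 1 -> Dchi2 x h = (x - h) ^+ 2 / (1 - h ^+ 2).
Proof.
move=> hh; rewrite /Dchi2 hh.
have h1 : h + 1 != 0 by apply/eqP; lra.
have h2 : 1 - h != 0 by apply/eqP; lra.
have -> : 1 - h ^+ 2 = (1 - h) * (h + 1) by ring.
by field; rewrite h1 h2.
Qed.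

Lemma Dchi2_le x h B : 0 <= B ->
  (-1 < h < 1 -> (x - h) ^+ 2 / (1 - h ^+ 2) <= B) -> Dchi2 x h <= B.
Proof.
move=> B0 hB; case: (boolP (-1 < h < 1)) => hh; first by rewrite Dchi2E // hB.
by rewrite /Dchi2 (negbTE hh).
Qed.

Lemma Dchi2xx x : Dchi2 x x = 0.
Proof.
case: (boolP (-1 < x < 1)) => hx; last by rewrite /Dchi2 (negbTE hx).
by rewrite Dchi2E // subrr expr0n mul0r.
Qed.

Definition midpoint S := (sup S + inf S) / 2.

Lemma midpoint_sym S a : S !=set0 -> has_ubound S -> has_lbound S ->
  (forall y, S y -> S (2 * a - y)) -> midpoint S = a.
Proof.
move=> S0 ubS lbS Ssym.
have h1 : sup S <= 2 * a - inf S.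
  by apply: ge_sup => // y /Ssym Sy; have := ge_inf lbS Sy; lra.
have h2 : 2 * a - sup S <= inf S.
  by apply: lb_le_inf => // y /Ssym Sy; have := ub_le_sup ubS Sy; lra.
rewrite /midpoint; lra.
Qed.

Section MidpointTerms.
Variables (S : set R) (x : R).
Hypotheses (Sx : S x) (S_bounded : forall y, S y -> -1 <= y <= 1).

Let S_ub : has_ubound S. Proof. by exists 1 => y /S_bounded /andP[]. Qed.
Let S_lb : has_lbound S. Proof. by exists (-1) => y /S_bounded /andP[]. Qed.

Lemma Dchi2_midpoint_sym a B : (forall y, S y -> S (2 * a - y)) -> 0 <= B ->
  (-1 < a < 1 -> (x - a) ^+ 2 / (1 - a ^+ 2) <= B) -> Dchi2 x (midpoint S) <= B.
Proof.
by move=> Ssym B0 hB; rewrite (midpoint_sym (a := a)) //; [exact: Dchi2_le | exists x].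
Qed.

Lemma Dchi2_midpoint_single : (forall y, S y -> y = x) -> Dchi2 x (midpoint S) = 0.
Proof.
move=> S1; rewrite (midpoint_sym (a := x)) ?Dchi2xx //; first by exists x.
by move=> y /S1 ->; rewrite (_ : 2 * x - x = x) //; ring.
Qed.

Lemma Dchi2_midpoint_pair c B : (forall y, S y -> y = x \/ y = c) -> 0 <= B ->
  (S c -> -1 < (x + c) / 2 < 1 -> ((x - c) / 2) ^+ 2 / (1 - ((x + c) / 2) ^+ 2) <= B) ->
  Dchi2 x (midpoint S) <= B.
Proof.
move=> S2 B0 hB; case: (pselect (S c)) => Sc; last first.
  rewrite Dchi2_midpoint_single // => y Sy.
  by case: (S2 _ Sy) => // yc; rewrite yc in Sy.
apply: (Dchi2_midpoint_sym (a := (x + c) / 2)) => //.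
  by move=> y /S2 [->|->]; [rewrite (_ : _ - x = c) | rewrite (_ : _ - c = x)] => //; field.
by move=> ha; rewrite (_ : x - _ = (x - c) / 2); [exact: hB | field].
Qed.

End MidpointTerms.

End Divergence.

Section CircleAlgebra.
Variable R : realType.
Implicit Types (s P Q A e f : R).

Lemma sqr_normr (x : R) : `|x| ^+ 2 = x ^+ 2.
Proof. exact/real_normK/num_real. Qed.

Lemma circle_line_meet s P Q e f : P ^+ 2 + Q ^+ 2 != 0 ->
  e ^+ 2 + f ^+ 2 = s ^+ 2 -> P * e + Q * f = P * s ->
  (e = s /\ f = 0) \/
  (e = s - 2 * s * Q ^+ 2 / (P ^+ 2 + Q ^+ 2) /\ f = 2 * s * P * Q / (P ^+ 2 + Q ^+ 2)).
Proof.
set R2 := P ^+ 2 + Q ^+ 2 => R2n0 circ line.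
(* (e - s, f) is orthogonal to (P, Q), hence a multiple t of (Q, -P) *)
set t := (Q * (e - s) - P * f) / R2.
have line0 : P * e + Q * f - P * s = 0 by rewrite line subrr.
have eE : e = s + t * Q.
  apply/eqP; rewrite -subr_eq0; apply/eqP; apply: (mulIf R2n0); rewrite mul0r.
  by rewrite -(mulr0 P) -line0 /t /R2; field.
have fE : f = - (t * P).
  apply/eqP; rewrite -subr_eq0; apply/eqP; apply: (mulIf R2n0); rewrite mul0r.
  by rewrite -(mulr0 Q) -line0 /t /R2; field.
clearbody t.
have : t * (2 * s * Q + t * R2) = 0.
  by rewrite -[RHS](subrr (s ^+ 2)) -{1}circ eE fE /R2; ring.
move/eqP; rewrite mulf_eq0 => /orP [/eqP t0|/eqP t_root].
  by left; rewrite eE fE t0 !mul0r addr0 oppr0.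
have tE : t = - (2 * s * Q) / R2.
  by apply: (mulIf R2n0); rewrite divfK //; apply/eqP; rewrite -addr_eq0 addrC t_root.
by right; rewrite eE fE tE; split; field.
Qed.

Lemma sum_if_eq_le n k (X : R) : 0 <= X ->
  \sum_(m < n) (if (m : nat) == k then X else 0) <= X.
Proof.
move=> X0; case: (ltnP k n) => [kn|nk].
  rewrite (bigD1 (Ordinal kn)) //= eqxx big1 ?addr0 // => m.
  by rewrite -val_eqE /= => /negbTE ->.
by rewrite big1 // => m _; rewrite ltn_eqF // (leq_trans (ltn_ord m)).
Qed.

Lemma sqr_add_eq0 (a b : R) : (a ^+ 2 + b ^+ 2 == 0) = (a == 0) && (b == 0).
Proof. by rewrite paddr_eq0 ?sqr_ge0 // !sqrf_eq0. Qed.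

End CircleAlgebra.

Section CircleConstraints.
Variable R : realType.

Variables (n : nat) (S : nat -> set R) (x A P Q : nat -> R) (s : R).
Let L m e f := A m + e * P m + f * Q m.

Hypotheses (s_ge0 : 0 <= s) (s_le1 : s <= 1).
Hypothesis APQ_bound :
  forall m, (m < n)%N -> `|A m| <= 1 /\ P m ^+ 2 + Q m ^+ 2 <= (1 - `|A m|) ^+ 2.
Hypothesis Sx : forall m, (m < n)%N -> S m (x m).
Hypothesis S_bounded : forall m, (m < n)%N -> forall y, S m y -> -1 <= y <= 1.
Hypothesis x_obs : forall m, (m < n)%N -> x m = L m s 0.
Hypothesis S_circle : forall m, (m < n)%N -> forall y, S m y ->
  exists e f, [/\ e ^+ 2 + f ^+ 2 = s ^+ 2,
    forall m', (m' < m)%N -> L m' e f = x m' & y = L m e f].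
Hypothesis S_sym : forall m, (m < n)%N ->
  (forall m', (m' < m)%N -> P m' = 0 /\ Q m' = 0) -> forall y, S m y -> S m (2 * A m - y).

Local Notation D m := (Dchi2 (x m) (midpoint (S m))).

Lemma Dchi2_inactive m : (m < n)%N ->
  (forall m', (m' <= m)%N -> P m' = 0 /\ Q m' = 0) -> D m = 0.
Proof.
move=> mn inactive; apply: Dchi2_midpoint_single; [exact: Sx | exact: S_bounded mn |].
have [Pm Qm] := inactive m (leqnn m).
by move=> y /(S_circle mn) [e [f [_ _ ->]]]; rewrite x_obs // /L Pm Qm !mulr0.
Qed.

Section FirstActive.
Variable m1 : nat.
Hypotheses (m1n : (m1 < n)%N) (R2_gt0 : 0 < P m1 ^+ 2 + Q m1 ^+ 2).
Hypothesis inactive_before : forall m, (m < m1)%N -> P m = 0 /\ Q m = 0.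

Local Notation R2 := (P m1 ^+ 2 + Q m1 ^+ 2).
(* the second intersection of the circle with the line L m1 e f = L m1 s 0 *)
Let e1 := s - 2 * s * Q m1 ^+ 2 / R2.
Let f1 := 2 * s * P m1 * Q m1 / R2.

Let weight_ge0 c : 0 <= s ^+ 2 * c ^+ 2 / R2.
Proof. by apply: divr_ge0; [rewrite mulr_ge0 ?sqr_ge0 | exact: ltW]. Qed.

Lemma Dchi2_first_active : D m1 <= s ^+ 2 * P m1 ^+ 2 / R2.
Proof.
have [A1 PQm1] := APQ_bound m1n.
apply: (Dchi2_midpoint_sym (Sx m1n) (S_bounded m1n) (S_sym m1n inactive_before)).
  exact: weight_ge0.
move=> _; rewrite x_obs // /L mul0r addr0 addrAC subrr add0r.
have A2_le : R2 <= 1 - A m1 ^+ 2.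
  apply: le_trans PQm1 _; rewrite -sqr_normr -subr_ge0.
  rewrite (_ : _ - _ = 2 * `|A m1| * (1 - `|A m1|)); last by ring.
  by rewrite !mulr_ge0 ?subr_ge0.
have A2_gt0 : 0 < 1 - A m1 ^+ 2 := lt_le_trans R2_gt0 A2_le.
rewrite ler_pdivrMr // mulrAC ler_pdivlMr // exprMn.
by apply: ler_wpM2l A2_le; rewrite mulr_ge0 ?sqr_ge0.
Qed.

Lemma S_after_first_active m : (m1 < m)%N -> (m < n)%N -> forall y, S m y ->
  y = x m \/ (y = L m e1 f1 /\ forall m', (m' < m)%N -> L m' e1 f1 = x m').
Proof.
move=> m1m mn y /(S_circle mn) [e [f [circ prefix ->]]].
have line : P m1 * e + Q m1 * f = P m1 * s.
  by have := prefix _ m1m; rewrite x_obs // /L; lra.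
case: (circle_line_meet (lt0r_neq0 R2_gt0) circ line) => [[-> ->]|[-> ->]] in prefix *.
  by left; rewrite x_obs.
by right.
Qed.

Lemma split_gap_le m : (m < n)%N ->
  -1 < (x m + L m e1 f1) / 2 < 1 ->
  ((x m - L m e1 f1) / 2) ^+ 2 / (1 - ((x m + L m e1 f1) / 2) ^+ 2)
    <= s ^+ 2 * Q m1 ^+ 2 / R2.
Proof.
move=> mn; have [A1 PQm] := APQ_bound mn; rewrite x_obs // /L /e1 /f1.
have R2n0 := lt0r_neq0 R2_gt0.
set h := (_ + _) / 2 => h_bound.
(* decompose (P m, Q m) along (P m1, Q m1) and its orthogonal *)
set g := (P m * P m1 + Q m * Q m1) / R2.
set k := (P m * Q m1 - Q m * P m1) / R2.
have gapE : (A m + s * P m + 0 * Q m - (A m + e1 * P m + f1 * Q m)) / 2 = s * Q m1 * k.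
  by rewrite /k /e1 /f1; field.
have hE : h = A m + s * (P m1 * g) by rewrite /h /g /e1 /f1; field.
have PQE : P m ^+ 2 + Q m ^+ 2 = (g ^+ 2 + k ^+ 2) * R2 by rewrite /g /k; field.
rewrite gapE; clearbody g k h.
set a := `|A m|; set y := `|P m1 * g|.
have [a0 y0] : 0 <= a /\ 0 <= y by split; exact: normr_ge0.
have y2_le : y ^+ 2 <= g ^+ 2 * R2.
  by rewrite sqr_normr exprMn mulrC ler_wpM2l ?sqr_ge0 // lerDl sqr_ge0.
have k2R2_le : k ^+ 2 * R2 + y ^+ 2 <= (1 - a) ^+ 2.
  by apply: le_trans PQm; rewrite PQE mulrDl addrC lerD2r.
have y_le : y <= 1 - a.
  rewrite -ler_sqr ?nnegrE ?subr_ge0 //.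
  by apply: le_trans k2R2_le; rewrite lerDr mulr_ge0 ?sqr_ge0 // ltW.
have h_le : `|h| <= a + y.
  rewrite hE (le_trans (ler_normD _ _)) // lerD2l normrM (ger0_norm s_ge0).
  by rewrite -[leRHS]mul1r ler_wpM2r.
have h2_le : h ^+ 2 <= (a + y) ^+ 2.
  by rewrite -sqr_normr lerXn2r ?nnegrE ?addr_ge0.
have k2R2_le_1h2 : k ^+ 2 * R2 <= 1 - h ^+ 2.
  have : 0 <= a * (1 - a - y) by rewrite mulr_ge0 // subr_ge0.
  lra.
have h2_lt1 : 0 < 1 - h ^+ 2.
  rewrite subr_gt0 -sqr_normr -[1](expr1n _ 2) ltr_pXn2r ?nnegrE //.
  by rewrite ltr_norml.
rewrite ler_pdivrMr // (_ : _ ^+ 2 = s ^+ 2 * Q m1 ^+ 2 / R2 * (k ^+ 2 * R2)); last by field.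
by rewrite ler_wpM2l ?weight_ge0.
Qed.

Section SecondSplit.
Variable m2 : nat.
Hypotheses (m1_lt_m2 : (m1 < m2)%N)
  (agree_before : forall m, (m1 < m < m2)%N -> L m e1 f1 = x m)
  (split_at : (m2 < n)%N -> L m2 e1 f1 != x m2).

Lemma Dchi2_before_split m : (m1 < m < m2)%N -> (m < n)%N -> D m = 0.
Proof.
move=> /andP[m1m mm2] mn; apply: Dchi2_midpoint_single; [exact: Sx | exact: S_bounded mn |].
move=> y /(S_after_first_active m1m mn) [//|[-> _]].
by rewrite agree_before // m1m.
Qed.

Lemma Dchi2_after_split m : (m2 < m)%N -> (m < n)%N -> D m = 0.
Proof.
move=> m2m mn; have m2n := ltn_trans m2m mn.
apply: Dchi2_midpoint_single; [exact: Sx | exact: S_bounded mn |].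
move=> y /(S_after_first_active (ltn_trans m1_lt_m2 m2m) mn) [//|[_ prefix]].
by have := split_at m2n; rewrite prefix ?eqxx.
Qed.

Lemma Dchi2_at_split : (m2 < n)%N -> D m2 <= s ^+ 2 * Q m1 ^+ 2 / R2.
Proof.
move=> m2n; apply: (Dchi2_midpoint_pair (Sx m2n) (S_bounded m2n) _ (weight_ge0 _)
  (fun _ => split_gap_le m2n)).
by move=> y /(S_after_first_active m1_lt_m2 m2n) [->|[-> _]]; [left | right].
Qed.

End SecondSplit.

Let X := s ^+ 2 * P m1 ^+ 2 / R2.
Let Y := s ^+ 2 * Q m1 ^+ 2 / R2.

Lemma Dchi2_le_split_weights m2 : (m1 < m2)%N ->
  (forall m, (m1 < m < m2)%N -> L m e1 f1 = x m) ->
  ((m2 < n)%N -> L m2 e1 f1 != x m2) ->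
  forall m, (m < n)%N -> D m <= (if m == m1 then X else 0) + (if m == m2 then Y else 0).
Proof.
move=> m12 agree split_at m mn.
have [X0 Y0] : 0 <= X /\ 0 <= Y by split; exact: weight_ge0.
have weights_ge0 : 0 <= (if m == m1 then X else 0) + (if m == m2 then Y else 0).
  by apply: addr_ge0; case: ifP.
move: weights_ge0; case: (ltngtP m m1) => [mm1|m1m|->] weights_ge0.
- rewrite Dchi2_inactive // => m' m'm; apply: inactive_before.
  exact: leq_ltn_trans m'm mm1.
- move: weights_ge0; case: (ltngtP m m2) => [mm2|m2m|mm2] weights_ge0.
  + by rewrite (Dchi2_before_split agree) ?m1m.
  + by rewrite (Dchi2_after_split m12 split_at).
  + by subst m2; rewrite add0r; apply: Dchi2_at_split.
- by rewrite ltn_eqF // addr0; exact: Dchi2_first_active.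
Qed.

Lemma sum_Dchi2_first_active : \sum_(m < n) D m <= s ^+ 2.
Proof.
(* m2 is the first index after m1 separating (s, 0) from (e1, f1), or n *)
have split_exists : exists m, (m1 < m)%N && ((n <= m)%N || (L m e1 f1 != x m)).
  by exists n; rewrite m1n leqnn.
case: (ex_minnP split_exists) => m2 /andP[m12 m2_split] m2_min.
have agree m : (m1 < m < m2)%N -> L m e1 f1 = x m.
  case/andP=> m1m mm2; apply/eqP; apply: contraTT mm2 => neq.
  by rewrite -leqNgt m2_min // m1m neq orbT.
have split_at : (m2 < n)%N -> L m2 e1 f1 != x m2.
  by rewrite ltnNge; move: m2_split; case: (n <= m2)%N.
apply: le_trans (ler_sum _ (fun m _ => Dchi2_le_split_weights m12 agree split_at (ltn_ord m))) _.
rewrite big_split /= (le_trans (lerD (sum_if_eq_le _ _ (weight_ge0 _))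
  (sum_if_eq_le _ _ (weight_ge0 _)))) //.
by rewrite /X /Y -mulrDl -mulrDr mulfK // lt0r_neq0.
Qed.

End FirstActive.

Lemma sum_Dchi2_circle_le : \sum_(m < n) D m <= s ^+ 2.
Proof.
have inactiveP m : ~~ (P m ^+ 2 + Q m ^+ 2 != 0) -> P m = 0 /\ Q m = 0.
  by rewrite negbK sqr_add_eq0 => /andP[/eqP -> /eqP ->].
case: (pselect (exists m, (m < n)%N && (P m ^+ 2 + Q m ^+ 2 != 0))) => [active|none].
  case: (ex_minnP active) => m1 /andP[m1n R2n0] m1_min.
  apply: (sum_Dchi2_first_active m1n).
    by rewrite lt_def R2n0 addr_ge0 ?sqr_ge0.
  move=> m mm1; have mn := ltn_trans mm1 m1n.
  by apply: inactiveP; apply: contraTN mm1 => R2n0'; rewrite -leqNgt m1_min // mn.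
rewrite big1 ?sqr_ge0 // => -[m mn] _; apply: Dchi2_inactive => // m' m'm.
apply: inactiveP; apply/negP => R2n0; apply: none; exists m'.
by rewrite R2n0 andbT (leq_ltn_trans m'm mn).
Qed.

End CircleConstraints.

Section LocalTerms.
Variable R : realType.
Implicit Types (v : rstate R) (b : nat -> R).

Lemma cond_values_bloch (rho : 'M[R[i]]_(2 * 2)) i :
  pure2 rho -> cond_values (bloch rho) i (bloch rho i).
Proof. by move=> pure_rho; exists rho. Qed.

Definition pauli_z1 v := RState (x0 v) (x1 v) (- x2 v) (- x3 v) (y0 v) (y1 v) (- y2 v) (- y3 v).
Definition pauli_x1 v := RState (x2 v) (x3 v) (x0 v) (x1 v) (y2 v) (y3 v) (y0 v) (y1 v).
Definition pauli_z2 v := RState (x0 v) (- x1 v) (x2 v) (- x3 v) (y0 v) (- y1 v) (y2 v) (- y3 v).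
Definition pauli_x2 v := RState (x1 v) (x0 v) (x3 v) (x2 v) (y1 v) (y0 v) (y3 v) (y2 v).
(* the antiunitary (sigma_x (x) I) conj: no local unitary fixes alpha_1, alpha_2
   and negates alpha_3 *)
Definition pauli_x1_conj v :=
  RState (x2 v) (x3 v) (x0 v) (x1 v) (- y2 v) (- y3 v) (- y0 v) (- y1 v).

Definition negates_at (f : rstate R -> rstate R) i := forall v,
  (forall k, (1 <= k < i)%N -> bloch_poly (f v) k = bloch_poly v k)
  /\ bloch_poly (f v) i = - bloch_poly v i.

Ltac negates_tac := move=> [? ? ? ? ? ? ? ?]; split;
  [ case => [|[|[|[|[|[|?]]]]]] /= ?; first [ring | lia] | rewrite /=; ring ].

Lemma negates_at_local i : (2 <= i <= 6)%N -> exists f, negates_at f i.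
Proof.
case: i => [|[|[|[|[|[|[|i]]]]]]] //= _.
- by exists pauli_z1; negates_tac.
- by exists pauli_x1; negates_tac.
- by exists pauli_x1_conj; negates_tac.
- by exists pauli_z2; negates_tac.
- by exists pauli_x2; negates_tac.
Qed.

Lemma Dchi2_negated_le b i : (2 <= i <= 6)%N -> cond_values b i (b i) ->
  Dchi2 (b i) (hmid b i) <= b i ^+ 2.
Proof.
move=> hi bi; have [f f_neg] := negates_at_local hi.
have [i2 i6] := andP hi; have i16 : (2 <= i <= 16)%N by rewrite i2 (leq_trans i6).
apply: (@Dchi2_midpoint_sym _ _ _ bi (fun y => @cond_values_bounded _ b i y i16) 0 _ _
  (sqr_ge0 _)).
  move=> y /(cond_valuesP _ _ i16) [v [v1 prefix ->]]; apply/(cond_valuesP _ _ i16).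
  have [f_prefix f_i] := f_neg v; exists (f v); split.
  - by rewrite f_prefix ?v1.
  - by move=> k ki; rewrite f_prefix ?prefix.
  - by rewrite f_i mulr0 sub0r.
by move=> _; rewrite subr0 expr0n /= subr0 divr1.
Qed.

Lemma Dchi2_beta3_le (rho : 'M[R[i]]_(2 * 2)) : pure2 rho ->
  Dchi2 (bloch rho 7) (hmid (bloch rho) 7) <= bloch rho 7 ^+ 2.
Proof.
move=> pure_rho.
have [v0 [v01 bE]] := pure2_rstate pure_rho.
have beta3 v : bloch_poly v 7 ^+ 2 = bloch_poly v 2 ^+ 2 + bloch_poly v 3 ^+ 2
    + bloch_poly v 4 ^+ 2 - bloch_poly v 5 ^+ 2 - bloch_poly v 6 ^+ 2.
  by have := sqr_norm_loc_b v; rewrite !sqr_normE !mxE /= => e; rewrite -e; ring.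
apply: (Dchi2_midpoint_pair (cond_values_bloch 7 pure_rho)
  (fun y => @cond_values_bounded _ _ 7 y isT) (c := - bloch rho 7) _ (sqr_ge0 _)).
  move=> y /(@cond_valuesP _ _ 7 _ isT) [v [v1 prefix ->]].
  suff /orP[/eqP|/eqP] : (bloch_poly v 7 == bloch rho 7) || (bloch_poly v 7 == - bloch rho 7).
  - by left.
  - by right.
  by rewrite -eqf_sqr beta3 !prefix // !bE // -beta3.
move=> _ _; rewrite opprK subrr mul0r expr0n /= subr0 divr1.
by rewrite (_ : (_ + _) / 2 = bloch rho 7) //; field.
Qed.

Lemma Dchi2_local_le (rho : 'M[R[i]]_(2 * 2)) i : pure2 rho -> (2 <= i <= 7)%N ->
  Dchi2 (bloch rho i) (hmid (bloch rho) i) <= bloch rho i ^+ 2.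
Proof.
move=> pure_rho /andP[i2 i7]; case: (ltnP i 7) => [i6|i7'].
  by apply: Dchi2_negated_le; [rewrite i2 | exact: cond_values_bloch].
have -> : i = 7%N by apply/eqP; rewrite eqn_leq i7 i7'.
exact: Dchi2_beta3_le.
Qed.

End LocalTerms.

Section NormalForm.
Variable R : realType.
Implicit Types (c e f mu s : R) (X : 'M[R]_3).

Definition axis0 c : 'cV[R]_3 := \col_(j < 3) (if j == 0 :> nat then c else 0).

Definition corr_nf e f : 'M[R]_3 :=
  delta_mx 0 0 + e *: (delta_mx 1 1 - delta_mx 2 2) + f *: (delta_mx 1 2 + delta_mx 2 1).

Lemma mulmx_axis0 m (A : 'M[R]_(m, 3)) c i : (A *m axis0 c) i 0 = A i 0 * c.
Proof. by rewrite mulmx3E !mxE /= !mulr0 !addr0. Qed.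

Lemma corr_nf_unique X mu s : mu != 0 ->
  X *m axis0 mu = axis0 mu -> X^T *m axis0 mu = axis0 mu ->
  X *m X^T = (s ^+ 2)%:M + axis0 mu *m (axis0 mu)^T -> \det X = - s ^+ 2 ->
  X = corr_nf (X 1 1) (X 1 2) /\ X 1 1 ^+ 2 + X 1 2 ^+ 2 = s ^+ 2.
Proof.
move=> mu0 Xu XTu XXT detX.
have col0 i : X i 0 * mu = axis0 mu i 0 by rewrite -Xu mulmx_axis0.
have row0 i : X 0 i * mu = axis0 mu i 0 by rewrite -XTu mulmx_axis0 mxE.
have [x00 x10 x20] : [/\ X 0 0 = 1, X 1 0 = 0 & X 2 0 = 0].
  by split; apply: (mulIf mu0); rewrite col0 mxE /= ?mul1r ?mul0r.
have [x01 x02] : X 0 1 = 0 /\ X 0 2 = 0.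
  by split; apply: (mulIf mu0); rewrite row0 mxE /= mul0r.
have XXT_at i j : (X *m X^T) i j = X i 0 * X j 0 + X i 1 * X j 1 + X i 2 * X j 2.
  by rewrite mulmx3E !mxE.
have n11 : X 1 1 ^+ 2 + X 1 2 ^+ 2 = s ^+ 2.
  by have := XXT_at 1 1; rewrite XXT !mxE big_ord1 !mxE /= x10; lra.
have n22 : X 2 1 ^+ 2 + X 2 2 ^+ 2 = s ^+ 2.
  by have := XXT_at 2 2; rewrite XXT !mxE big_ord1 !mxE /= x20; lra.
have n12 : X 1 1 * X 2 1 + X 1 2 * X 2 2 = 0.
  by have := XXT_at 1 2; rewrite XXT !mxE big_ord1 !mxE /= x10 x20; lra.
have detE : X 1 1 * X 2 2 - X 1 2 * X 2 1 = - s ^+ 2.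
  by rewrite -detX det_mx33 x00 x01 x02; ring.
have [x21 x22] : X 2 1 = X 1 2 /\ X 2 2 = - X 1 1.
  have : (X 2 1 - X 1 2) ^+ 2 + (X 2 2 + X 1 1) ^+ 2 == 0.
    by apply/eqP; lra.
  by rewrite sqr_add_eq0 subr_eq0 addr_eq0 => /andP[/eqP -> /eqP ->].
split=> //; apply/matrixP => i j; case: (ord3P i) => ->; case: (ord3P j) => ->;
  by rewrite !mxE /= ?x00 ?x01 ?x02 ?x10 ?x20 ?x21 ?x22; ring.
Qed.

Section Orthogonal.
Variable O : 'M[R]_3.
Hypothesis O_orth : O^T *m O = 1%:M.

Lemma orth_mul_tr : O *m O^T = 1%:M.
Proof. exact: mulmx1C. Qed.

Lemma orth_row_norm i : O i 0 ^+ 2 + O i 1 ^+ 2 + O i 2 ^+ 2 = 1.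
Proof.
have := congr1 (fun M : 'M[R]_3 => M i i) orth_mul_tr.
by rewrite mulmx3E !mxE eqxx !expr2.
Qed.

Lemma sqr_norm_orth (u : 'cV[R]_3) : sqr_norm (O *m u) = sqr_norm u.
Proof. by rewrite /sqr_norm trmx_mul mulmxA -(mulmxA _ O^T) O_orth mulmx1. Qed.

Lemma half_turn_orth (w : 'cV[R]_3) : half_turn (O *m w) = O *m half_turn w *m O^T.
Proof.
rewrite /half_turn sqr_norm_orth mulmxBr mulmxBl -scalemxAr -scalemxAl trmx_mul !mulmxA.
by rewrite mul_mx_scalar -scalemxAl orth_mul_tr scalemx1.
Qed.

End Orthogonal.

Lemma unit_pair_bound (x1 x2 x3 y1 y2 y3 : R) :
  x1 ^+ 2 + x2 ^+ 2 + x3 ^+ 2 = 1 -> y1 ^+ 2 + y2 ^+ 2 + y3 ^+ 2 = 1 ->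
  `|x1 * y1| <= 1 /\
  (x2 * y2 - x3 * y3) ^+ 2 + (x2 * y3 + x3 * y2) ^+ 2 <= (1 - `|x1 * y1|) ^+ 2.
Proof.
move=> x_unit y_unit; rewrite normrM.
have PQE : (x2 * y2 - x3 * y3) ^+ 2 + (x2 * y3 + x3 * y2) ^+ 2
    = (1 - `|x1| ^+ 2) * (1 - `|y1| ^+ 2).
  have x23 : 1 - x1 ^+ 2 = x2 ^+ 2 + x3 ^+ 2 by rewrite -x_unit; ring.
  have y23 : 1 - y1 ^+ 2 = y2 ^+ 2 + y3 ^+ 2 by rewrite -y_unit; ring.
  by rewrite !sqr_normr x23 y23; ring.
have [a0 c0] : 0 <= `|x1| /\ 0 <= `|y1| by split; exact: normr_ge0.
have unit_le1 (z w w' : R) : z ^+ 2 + w ^+ 2 + w' ^+ 2 = 1 -> `|z| <= 1.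
  move=> e; rewrite -(expr_le1 (n := 2)) ?normr_ge0 // sqr_normr -e.
  by rewrite -addrA lerDl addr_ge0 ?sqr_ge0.
have [a1 c1] := (unit_le1 _ _ _ x_unit, unit_le1 _ _ _ y_unit).
split; first by rewrite -(mul1r 1) ler_pM.
rewrite PQE -subr_ge0 (_ : _ - _ = (`|x1| - `|y1|) ^+ 2) ?sqr_ge0 //; ring.
Qed.

Lemma half_turn_axis0 c : half_turn (axis0 1) *m axis0 c = axis0 c.
Proof.
apply/matrixP => i k; case: (ord3P i) => ->;
  by rewrite mulmx3E /half_turn sqr_normE !mxE !big_ord1 !mxE /=; ring.
Qed.

Lemma half_turn_corr_nf e f : half_turn (axis0 1) *m corr_nf e f = corr_nf (- e) (- f).
Proof.
apply/matrixP => i j; case: (ord3P i) => ->; case: (ord3P j) => ->;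
  by rewrite mulmx3E /half_turn sqr_normE !mxE !big_ord1 !mxE /=; ring.
Qed.

End NormalForm.

Section FlatIndex.
Variable R : realType.
Implicit Types (v w : rstate R) (O U : 'M[R]_3).

Definition flat_row m : 'I_3 := inord (m %/ 3).
Definition flat_col m : 'I_3 := inord (m %% 3).

Lemma flat_entry (g : nat -> R) m : (m < 9)%N ->
  (\matrix_(j < 3, k < 3) g (8 + 3 * j + k)%N) (flat_row m) (flat_col m) = g (8 + m)%N.
Proof.
move=> m9; rewrite mxE !inordK ?ltn_pmod //; last by rewrite ltn_divLR.
by rewrite -addnA -mulnC -divn_eq.
Qed.

Lemma corr_flat v m : (m < 9)%N -> bloch_poly v (8 + m) = corr v (flat_row m) (flat_col m).
Proof. by move=> m9; rewrite flat_entry. Qed.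

Definition nf_A O U m := O (flat_row m) 0 * U (flat_col m) 0.
Definition nf_P O U m :=
  O (flat_row m) 1 * U (flat_col m) 1 - O (flat_row m) 2 * U (flat_col m) 2.
Definition nf_Q O U m :=
  O (flat_row m) 1 * U (flat_col m) 2 + O (flat_row m) 2 * U (flat_col m) 1.

Lemma corr_nf_flat O U e f m :
  (O *m corr_nf e f *m U^T) (flat_row m) (flat_col m)
  = nf_A O U m + e * nf_P O U m + f * nf_Q O U m.
Proof. by rewrite !mulmx3E !mxE /= /nf_A /nf_P /nf_Q; ring. Qed.

Lemma bloch_poly_prefix v w m : bloch_poly w 1 = bloch_poly v 1 ->
  loc_a w = loc_a v -> loc_b w = loc_b v ->
  (forall m', (m' < m)%N -> bloch_poly w (8 + m') = bloch_poly v (8 + m')) ->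
  forall k, (1 <= k < 8 + m)%N -> bloch_poly w k = bloch_poly v k.
Proof.
move=> e1 ea eb ec k /andP[k1 km].
case: (ltnP k 2) => [k2|k2]; first by have -> : k = 1%N by lia.
case: (ltnP k 5) => [k5|k5].
  have := congr1 (fun u : 'cV[R]_3 => u (inord (k - 2)) 0) ea.
  by rewrite !mxE inordK ?subnK // ltn_subLR.
case: (ltnP k 8) => [k8|k8].
  have := congr1 (fun u : 'cV[R]_3 => u (inord (k - 5)) 0) eb.
  by rewrite !mxE inordK ?subnK // ltn_subLR.
by rewrite -(subnKC k8) ec // -(ltn_add2l 8) subnKC.
Qed.

End FlatIndex.

Section AlignedStates.
Variable R : realType.
Variables (O1 O2 : 'M[R]_3) (mu s : R).
Hypotheses (O1_orth : O1^T *m O1 = 1%:M) (O2_orth : O2^T *m O2 = 1%:M).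
Hypotheses (O1_det : \det O1 = 1) (O2_det : \det O2 = 1).
Hypotheses (mu_neq0 : mu != 0) (mu_s : mu ^+ 2 + s ^+ 2 = 1).
Local Notation u := (axis0 mu).

Lemma corr_aligned (v : rstate R) : bloch_poly v 1 = 1 ->
  loc_a v = O1 *m u -> loc_b v = O2 *m u ->
  exists e f, e ^+ 2 + f ^+ 2 = s ^+ 2 /\ corr v = O1 *m corr_nf e f *m O2^T.
Proof.
move=> v1 va vb.
have a2 : 1 - sqr_norm (loc_a v) = s ^+ 2.
  by rewrite va sqr_norm_orth // sqr_normE !mxE /= -mu_s; ring.
have Cb : corr v *m loc_b v = loc_a v by rewrite corr_loc_b v1 scale1r.
have CTa : (corr v)^T *m loc_a v = loc_b v by rewrite corr_tr_loc_a v1 scale1r.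
have CCT : corr v *m (corr v)^T = (s ^+ 2)%:M + loc_a v *m (loc_a v)^T.
  by rewrite corr_corr_tr v1 expr1n a2.
have detC : \det (corr v) = - s ^+ 2 by rewrite det_corr v1 expr1n a2 mulr1.
set X := O1^T *m corr v *m O2.
have CX : corr v = O1 *m X *m O2^T.
  by rewrite /X !mulmxA orth_mul_tr // mul1mx -mulmxA orth_mul_tr // mulmx1.
have Xu : X *m u = u by rewrite /X -!mulmxA -vb Cb va mulmxA O1_orth mul1mx.
have XTu : X^T *m u = u.
  by rewrite /X !trmx_mul trmxK -!mulmxA -va CTa vb mulmxA O2_orth mul1mx.
have XXT : X *m X^T = (s ^+ 2)%:M + u *m u^T.
  rewrite /X !trmx_mul trmxK !mulmxA -(mulmxA _ O2) orth_mul_tr // mulmx1.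
  rewrite -(mulmxA _ (corr v)) CCT mulmxDr mulmxDl va trmx_mul !mulmxA O1_orth mul1mx.
  by rewrite -[_ *m O1^T *m O1]mulmxA O1_orth mulmx1 mul_mx_scalar -scalemxAl O1_orth scalemx1.
have detX : \det X = - s ^+ 2 by rewrite /X !det_mulmx det_tr O1_det O2_det detC mul1r mulr1.
have [XE ef] := corr_nf_unique mu_neq0 Xu XTu XXT detX.
by exists (X 1 1), (X 1 2); split; rewrite // CX {1}XE.
Qed.

Let n := O1 *m axis0 1.

Lemma half_turn_aligned (v : rstate R) e f : bloch_poly v 1 = 1 ->
  loc_a v = O1 *m u -> loc_b v = O2 *m u -> corr v = O1 *m corr_nf e f *m O2^T ->
  [/\ bloch_poly (rot1 n v) 1 = 1, loc_a (rot1 n v) = O1 *m u,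
      loc_b (rot1 n v) = O2 *m u & corr (rot1 n v) = O1 *m corr_nf (- e) (- f) *m O2^T].
Proof.
move=> v1 va vb vC.
have n1 : sqr_norm n = 1 by rewrite sqr_norm_orth // sqr_normE !mxE /=; ring.
have htn : half_turn n = O1 *m half_turn (axis0 1) *m O1^T by exact: half_turn_orth.
have htO1 : half_turn n *m O1 = O1 *m half_turn (axis0 1).
  by rewrite htn -mulmxA O1_orth mulmx1.
split.
- by rewrite norm_rot1 n1 v1 mulr1.
- by rewrite loc_a_rot1 va mulmxA htO1 -mulmxA half_turn_axis0.
- by rewrite loc_b_rot1 n1 scale1r.
- by rewrite corr_rot1 vC !mulmxA htO1 -(mulmxA O1) half_turn_corr_nf.
Qed.

Variable b : nat -> R.
Hypotheses (b_loc_a : \col_(j < 3) b (j + 2)%N = O1 *m u)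
  (b_loc_b : \col_(j < 3) b (j + 5)%N = O2 *m u).
Local Notation L m e f := (nf_A O1 O2 m + e * nf_P O1 O2 m + f * nf_Q O1 O2 m).

Lemma aligned_of_prefix (v : rstate R) m :
  (forall k, (1 <= k < 8 + m)%N -> bloch_poly v k = b k) ->
  loc_a v = O1 *m u /\ loc_b v = O2 *m u.
Proof.
move=> prefix; rewrite -b_loc_a -b_loc_b.
by split; apply/matrixP => i j; rewrite !mxE prefix //; case: i => i /= i3; lia.
Qed.

Let corr_index m : (m < 9)%N -> (2 <= 8 + m <= 16)%N.
Proof. by move=> m9; apply/andP; split; lia. Qed.

Lemma cond_corr_circle m : (m < 9)%N -> forall y, cond_values b (8 + m) y ->
  exists e f, [/\ e ^+ 2 + f ^+ 2 = s ^+ 2,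
    forall m', (m' < m)%N -> L m' e f = b (8 + m') & y = L m e f].
Proof.
move=> m9 y /(cond_valuesP _ _ (corr_index m9)) [v [v1 prefix ->]].
have [va vb] := aligned_of_prefix prefix.
have [e [f [ef vC]]] := corr_aligned v1 va vb.
exists e, f; split; rewrite -?corr_nf_flat -?vC -?corr_flat //.
  by move=> m' m'm; rewrite -corr_nf_flat -vC -corr_flat ?prefix //; lia.
Qed.

Lemma cond_corr_sym m : (m < 9)%N ->
  (forall m', (m' < m)%N -> nf_P O1 O2 m' = 0 /\ nf_Q O1 O2 m' = 0) ->
  forall y, cond_values b (8 + m) y -> cond_values b (8 + m) (2 * nf_A O1 O2 m - y).
Proof.
move=> m9 inactive y /(cond_valuesP _ _ (corr_index m9)) [v [v1 prefix ->]].
have [va vb] := aligned_of_prefix prefix.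
have [e [f [_ vC]]] := corr_aligned v1 va vb.
have [w1 wa wb wC] := half_turn_aligned v1 va vb vC.
apply/(cond_valuesP _ _ (corr_index m9)); exists (rot1 n v); split => //.
  move=> k hk; rewrite -prefix // (bloch_poly_prefix (v := v) _ _ _ _ hk) //.
  - by rewrite w1 v1.
  - by rewrite wa va.
  - by rewrite wb vb.
  move=> m' m'm; have m'9 := ltn_trans m'm m9.
  by rewrite !corr_flat // wC vC !corr_nf_flat; case: (inactive _ m'm) => -> ->; ring.
by rewrite !corr_flat // wC vC !corr_nf_flat; ring.
Qed.

Hypothesis b_self : forall i, cond_values b i (b i).
Hypothesis b_corr : \matrix_(j < 3, k < 3) b (8 + 3 * j + k)%N = O1 *m corr_nf s 0 *m O2^T.
Hypothesis s_ge0 : 0 <= s.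

Lemma sum_Dchi2_corr_le : \sum_(m < 9) Dchi2 (b (8 + m)%N) (hmid b (8 + m)) <= s ^+ 2.
Proof.
apply: (@sum_Dchi2_circle_le _ 9 (fun m => cond_values b (8 + m)) (fun m => b (8 + m)%N)
  (nf_A O1 O2) (nf_P O1 O2) (nf_Q O1 O2) s s_ge0).
- by rewrite -(expr_le1 (n := 2)) // -mu_s lerDr sqr_ge0.
- by move=> m _; apply: unit_pair_bound; apply: orth_row_norm.
- by move=> m _.
- by move=> m m9 y; apply: cond_values_bounded; exact: corr_index.
- by move=> m m9; rewrite -(flat_entry _ m9) b_corr corr_nf_flat.
- exact: cond_corr_circle.
- exact: cond_corr_sym.
Qed.

End AlignedStates.

Section BlochSums.
Variable R : realType.

Lemma Ipost_split (b : nat -> R) : Ipost b =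
  \sum_(2 <= i < 8) Dchi2 (b i) (hmid b i) + \sum_(m < 9) Dchi2 (b (8 + m)%N) (hmid b (8 + m)).
Proof.
rewrite /Ipost (big_cat_nat _ (n := 8)) //; congr (_ + _).
by rewrite (big_addn 0 17 8) big_mkord; apply: eq_bigr => i _; rewrite addnC.
Qed.

Lemma sum_local_sqr (b : nat -> R) : \sum_(2 <= i < 8) b i ^+ 2 =
  sqr_norm (\col_(j < 3) b (j + 2)%N) + sqr_norm (\col_(j < 3) b (j + 5)%N).
Proof.
rewrite !sqr_normE !mxE /= big_ltn // big_ltn // big_ltn // big_ltn // big_ltn //.
by rewrite big_ltn // big_geq // addr0 !addrA.
Qed.

Lemma diag_corr_nf (s : R) :
  diag_mx (\row_(j < 3) (if j == 0 :> nat then 1 else if j == 1 :> nat then s else - s))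
  = corr_nf s 0.
Proof.
apply/matrixP => i j; case: (ord3P i) => ->; case: (ord3P j) => ->;
  by rewrite !mxE /=; ring.
Qed.

End BlochSums.

Theorem lemma5 (R : realType) (rho : 'M[R[i]]_(2 * 2)) (theta : R)
    (O1 O2 : 'M[R]_3) :
  pure2 rho ->
  0 <= theta <= pi / 2 ->
  SO3 O1 -> SO3 O2 ->
  0 < `|cos theta| < 1 ->
  (\col_(j < 3) bloch rho (j + 2)%N) =
    O1 *m (\col_(j < 3) (if j == 0 :> nat then cos theta else 0)) ->
  (\col_(j < 3) bloch rho (j + 5)%N) =
    O2 *m (\col_(j < 3) (if j == 0 :> nat then cos theta else 0)) ->
  (\matrix_(j < 3, k < 3) bloch rho (8 + 3 * j + k)%N) =
    O1 *m diag_mx (\row_(j < 3)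
      (if j == 0 :> nat then 1 else if j == 1 :> nat then sin theta
       else - sin theta)) *m O2^T ->
  Ipost (bloch rho) < 2.
Proof.
move=> pure_rho /andP[theta_ge0 theta_le] [O1_orth O1_det] [O2_orth O2_det] /andP[mu_gt0 mu_lt1].
rewrite diag_corr_nf => b_loc_a b_loc_b b_corr.
have mu_s : cos theta ^+ 2 + sin theta ^+ 2 = 1 := cos2Dsin2 theta.
have mu_neq0 : cos theta != 0 by rewrite -normr_gt0.
have s_ge0 : 0 <= sin theta.
  apply: sin_ge0_pi; rewrite theta_ge0 (le_trans theta_le) //.
  by have := pi_gt0 R; lra.
have local_le : \sum_(2 <= i < 8) Dchi2 (bloch rho i) (hmid (bloch rho) i)
    <= \sum_(2 <= i < 8) bloch rho i ^+ 2.
  by apply: ler_sum_nat => i /andP[i2 i8]; apply: Dchi2_local_le; rewrite // i2.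
have corr_le := sum_Dchi2_corr_le O1_orth O2_orth O1_det O2_det mu_neq0 mu_s
  b_loc_a b_loc_b (fun i => cond_values_bloch i pure_rho) b_corr s_ge0.
have local_sum : \sum_(2 <= i < 8) bloch rho i ^+ 2 = 2 * cos theta ^+ 2.
  rewrite sum_local_sqr b_loc_a b_loc_b !sqr_norm_orth // sqr_normE !mxE /=; ring.
rewrite Ipost_split; apply: (le_lt_trans (lerD local_le corr_le)).
have mu2_lt1 : cos theta ^+ 2 < 1.
  by rewrite -sqr_normr expr2 -(mulr1 1) ltr_pM.
by rewrite local_sum; lra.
Qed.
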